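(* Let $r\geq 3$. Then $Z_r$ is $(2,2)$-uniform if and only if $r\leq 4$; $Z_r\backslash y$ is $(2,2)$-uniform if and only if $r\leq 4$; and $Z_r\backslash t$ is $(2,2)$-uniform if and only if $r\leq 5$.
   Context: A matroid is $(2,2)$-uniform if it has no minor isomorphic to $U_{2,2}\oplus U_{0,2}$. For $r\ge3$, the rank-$r$ binary spike $Z_r$ is the vector matroid over $GF(2)$ of the $r\times(2r+1)$ matrix $[I_r\mid J_r-I_r\mid\mathbf 1]$, where $J_r$ is the all-ones $r\times r$ matrix; the last column (the all-ones vector) is the tip $t$, and $y$ denotes any non-tip element of $Z_r$. *)

From HB Require Import structures.
From mathcomp Require Import all_boot all_order all_algebra all_field.
Set Implicit Arguments. Unset Strict Implicit. Unset Printing Implicit Defensive.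
Import GRing.Theory.
Local Open Scope ring_scope.

(* A (finite) matroid on a subset [ground] of a finite type, given by its
   independent sets. All independent sets are required to lie in [ground]
   by the constructions below. *)
Record matroid (T : finType) := Matroid {
  ground : {set T};
  indep : {set T} -> bool }.

Definition max_indep_in (T : finType) (M : matroid T) (X J : {set T}) : bool :=
  [&& J \subset X, indep M J & [forall x in X :\: J, ~~ indep M (x |: J)]].

Definition delete (T : finType) (M : matroid T) (D : {set T}) : matroid T :=
  Matroid (ground M :\: D)
          (fun I => (I \subset ground M :\: D) && indep M I).

Definition contract (T : finType) (M : matroid T) (C : {set T}) : matroid T :=
  Matroid (ground M :\: C)
          (fun I => (I \subset ground M :\: C) &&
             [exists J : {set T}, max_indep_in M C J && indep M (I :|: J)]).

Definition iso (T1 T2 : finType) (M1 : matroid T1) (M2 : matroid T2) : Prop :=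
  exists f : T1 -> T2,
    [/\ {in ground M1 &, injective f},
        f @: ground M1 = ground M2 &
        forall I : {set T1}, I \subset ground M1 ->
          indep M1 I = indep M2 (f @: I)].

Definition has_minor_iso (T T' : finType) (M : matroid T) (N : matroid T') : Prop :=
  exists C D : {set T},
    [/\ C \subset ground M, D \subset ground M, [disjoint C & D] &
        iso N (delete (contract M C) D)].

Definition uniform_matroid (k n : nat) : matroid 'I_n :=
  Matroid setT (fun I => (#|I| <= k)%N).

Definition direct_sum (T1 T2 : finType) (M1 : matroid T1) (M2 : matroid T2)
  : matroid (T1 + T2)%type :=
  Matroid (inl @: ground M1 :|: inr @: ground M2)
          (fun I => [&& I \subset inl @: ground M1 :|: inr @: ground M2,
                        indep M1 [set x | inl x \in I] &
                        indep M2 [set x | inr x \in I]]).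

Definition U22_U02 := direct_sum (uniform_matroid 2 2) (uniform_matroid 0 2).

Definition two_two_uniform (T : finType) (M : matroid T) : Prop :=
  ~ has_minor_iso M U22_U02.

Definition vector_matroid (F : fieldType) (m n : nat) (A : 'M[F]_(m, n))
  : matroid 'I_n :=
  Matroid setT (fun I => free [seq col j A | j <- enum I]).

Definition spike_mx (r : nat) : 'M['F_2]_(r, r + r + 1) :=
  row_mx (row_mx 1%:M (const_mx 1 - 1%:M)) (const_mx 1).

Definition spike (r : nat) : matroid 'I_(r + r + 1) := vector_matroid (spike_mx r).

(* The tip: the last column (all-ones vector) *)
Definition tip (r : nat) : 'I_(r + r + 1) := rshift (r + r) (ord0 : 'I_1).

From mathcomp Require Import all_boot all_order all_algebra all_field zify.
Set Implicit Arguments. Unset Strict Implicit. Unset Printing Implicit Defensive.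
Import GRing.Theory.
Local Open Scope ring_scope.

(* A matroid represented by a matrix A has a U_{2,2} (+) U_{0,2} minor iff there
   are distinct c, d outside a set J with col c, col d in the span of J and
   J + a + b independent for two more elements a, b: contract J and delete all
   but a, b, c, d.  Over GF(2) the span condition yields zero-sum sets Z1, Z2
   inside J + c and J + d.  In the binary spike a zero-sum set missing some pair
   {x_i, y_i} is a union of such pairs, plus the tip iff the number of pairs is
   odd; so Z1, Z2 and their symmetric difference have at least 3 elements each,
   or 4 when the tip is absent.  As |Z1| + |Z2| + |Z1 (+) Z2| = 2 |Z1 u Z2| and
   Z1 u Z2 lies in J + c + d, this forces |J| + 2 >= 5 (>= 6 without the tip),
   while |J| + 2 <= r.  Conversely, contracting {x_p, x_q, t} turns y_p, y_q into
   loops and leaves x_u, x_v independent when r >= 5; without the tip, contract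
   {x_p, y_p, x_q, x_w} and use y_q, y_w when r >= 6. *)

Lemma card_symdiff (T : finType) (A B : {set T}) :
  (#|A| + #|B| + #|[set x | (x \in A) (+) (x \in B)]| = 2 * #|A :|: B|)%N.
Proof.
rewrite -!sum1_card !(big_mkcond (fun x => x \in _)) -!big_split big_distrr /=.
by apply: eq_bigr => x _; rewrite !inE; case: (x \in A); case: (x \in B).
Qed.

Lemma addv_F2 (V : lmodType 'F_2) (v : V) : v + v = 0.
Proof. by rewrite -{1 2}(scale1r v) -scalerDl (_ : 1 + 1 = 0) ?scale0r //; apply/eqP. Qed.

Lemma F2_neq0 (k : 'F_2) : k != 0 -> k = 1.
Proof. by case: k => [[|[|//]] ?] // _; apply/val_inj. Qed.

Lemma F2_natr_eq0 n : ((n%:R : 'F_2) == 0) = ~~ odd n.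
Proof. by rewrite -(dvdn_pcharf (pchar_Fp (isT : prime 2))) dvdn2. Qed.

(** * Columns of a matrix *)

Section ColumnSets.
Variables (F : fieldType) (m n : nat) (A : 'M[F]_(m, n)).

Definition cols (I : {set 'I_n}) := [seq col j A | j <- enum I].

Lemma perm_cols_setU (I J : {set 'I_n}) :
  [disjoint I & J] -> perm_eq (cols (I :|: J)) (cols I ++ cols J).
Proof.
move=> dIJ; rewrite /cols -map_cat; apply/perm_map/uniq_perm.
- exact: enum_uniq.
- rewrite cat_uniq !enum_uniq andbT /=; apply/hasPn => j.
  by rewrite !mem_enum => jJ; rewrite (disjointFl dIJ jJ).
- by move=> j; rewrite mem_cat !mem_enum inE.
Qed.

Lemma free_cols_setU1 x (J : {set 'I_n}) : x \notin J ->
  free (cols (x |: J)) = (col x A \notin <<cols J>>%VS) && free (cols J).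
Proof.
move=> xJ; rewrite (perm_free (perm_cols_setU _)) ?disjoints1 //.
by rewrite {1}/cols enum_set1 /= free_cons.
Qed.

Lemma free_colsS (I J : {set 'I_n}) : I \subset J -> free (cols J) -> free (cols I).
Proof.
move=> sIJ; rewrite -(setID J I) (setIidPr sIJ) (perm_free (perm_cols_setU _)).
  exact: catl_free.
by rewrite disjoints_subset setCD subsetUr.
Qed.

Lemma memv_span_cols (I : {set 'I_n}) j : j \in I -> col j A \in <<cols I>>%VS.
Proof. by move=> jI; apply/memv_span/map_f; rewrite mem_enum. Qed.

Lemma card_free_cols (I : {set 'I_n}) : free (cols I) -> (#|I| <= m)%N.
Proof.
move=> /eqP dimI; have := dimvS (subvf <<cols I>>%VS).
by rewrite dimI dimvf /dim /= size_map -cardE muln1.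
Qed.

Lemma span_cols_notfree (I J : {set 'I_n}) x :
  x \in I -> x \notin J -> col x A \in <<cols J>>%VS -> ~~ free (cols (I :|: J)).
Proof.
move=> xI xJ xJA; have sxJ : x |: J \subset I :|: J.
  by rewrite subUset sub1set inE xI subsetUr.
by apply/negP => /(free_colsS sxJ); rewrite free_cols_setU1 // xJA.
Qed.

End ColumnSets.

Section BinaryColumns.
Variables (m n : nat) (A : 'M['F_2]_(m, n)).

Definition zero_sum (Z : {set 'I_n}) := \sum_(j in Z) col j A == 0.

Lemma span_cols_F2 (I : {set 'I_n}) v : v \in <<cols A I>>%VS ->
  exists2 P : {set 'I_n}, P \subset I & v = \sum_(j in P) col j A.
Proof.
rewrite /cols; have : {subset enum I <= I} by move=> j; rewrite mem_enum.
elim: (enum I) v => [|j s IH] v /= sI.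
  by rewrite span_nil memv0 => /eqP ->; exists set0; rewrite ?sub0set ?big_set0.
have jI : j \in I by apply: sI; rewrite inE eqxx.
have sIs : {subset s <= I} by move=> i si; apply: sI; rewrite inE si orbT.
rewrite span_cons => /memv_addP [u /vlineP [k ->] [w /IH [//|P sPI ->] ->]].
have [->|/F2_neq0 ->] := eqVneq k 0; first by exists P; rewrite // scale0r add0r.
rewrite scale1r; have [jP|jP] := boolP (j \in P).
  exists (P :\ j); first exact: subset_trans (subD1set P j) sPI.
  by rewrite (big_setD1 _ jP) addrA addv_F2 add0r.
by exists (j |: P); rewrite ?subUset ?sub1set ?jI ?big_setU1.
Qed.

Lemma zero_sum_of_span c (J : {set 'I_n}) : c \notin J ->
  col c A \in <<cols A J>>%VS -> exists Z, [/\ zero_sum Z, c \in Z & Z \subset c |: J].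
Proof.
move=> cJ /span_cols_F2 [P sPJ ePc].
have cP : c \notin P by apply: contra cJ; apply: (subsetP sPJ).
exists (c |: P); split; last exact: setUS.
- by rewrite /zero_sum big_setU1 //= ePc addv_F2.
- exact: setU11.
Qed.

Lemma free_cols_F2 (I : {set 'I_n}) :
  (forall Z : {set 'I_n}, Z \subset I -> zero_sum Z -> Z = set0) -> free (cols A I).
Proof.
move Ek : #|I| => k; elim: k I Ek => [|k IH] I cardI noZ.
  by move/eqP: cardI; rewrite cards_eq0 => /eqP ->; rewrite /cols enum_set0 nil_free.
have [x xI] : exists x, x \in I by apply/card_gt0P; rewrite cardI.
rewrite -(setD1K xI) free_cols_setU1 ?setD11 //; apply/andP; split.
  apply/negP => /(zero_sum_of_span (negbT (setD11 x I))) [Z [zZ xZ]].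
  by rewrite setD1K // => /noZ /(_ zZ) Z0; rewrite Z0 inE in xZ.
apply: IH => [|Z sZ]; first by move: cardI; rewrite (cardsD1 x) xI => -[].
by apply: noZ; apply: subset_trans sZ (subsetDl _ _).
Qed.

Lemma zero_sum_symdiff (Z1 Z2 : {set 'I_n}) : zero_sum Z1 -> zero_sum Z2 ->
  zero_sum [set j | (j \in Z1) (+) (j \in Z2)].
Proof.
rewrite /zero_sum => /eqP z1 /eqP z2.
suff -> : \sum_(j in [set j | (j \in Z1) (+) (j \in Z2)]) col j A =
          \sum_(j in Z1) col j A + \sum_(j in Z2) col j A by rewrite z1 z2 addr0.
rewrite !(big_mkcond (fun j => j \in _)) -big_split /=; apply: eq_bigr => j _.
by rewrite inE; case: (j \in Z1); case: (j \in Z2); rewrite /= ?addv_F2 ?addr0 ?add0r.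
Qed.

End BinaryColumns.

(** * Minors isomorphic to U_{2,2} (+) U_{0,2} *)

Lemma indep_minor (T : finType) (M : matroid T) (C D I : {set T}) :
  I \subset ground M :\: C :\: D ->
  indep (delete (contract M C) D) I =
  [exists J, max_indep_in M C J && indep M (I :|: J)].
Proof. by move=> sI; rewrite /= sI (subset_trans sI (subsetDl _ _)). Qed.

Lemma max_indep_in_self (T : finType) (M : matroid T) (C : {set T}) :
  indep M C -> max_indep_in M C C.
Proof.
by move=> iC; rewrite /max_indep_in subxx iC; apply/forall_inP => x; rewrite setDv inE.
Qed.

Lemma ord2_cases (i : 'I_2) : i = ord0 \/ i = ord_max.
Proof. by case: i => [[|[|//]] ?]; [left | right]; apply/val_inj. Qed.

Lemma ground_U22_U02 : ground U22_U02 = setT.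
Proof. by apply/setP => -[x|x]; rewrite !inE ?imset_f ?orbT. Qed.

Lemma indep_U22_U02 (I : {set 'I_2 + 'I_2}) :
  indep U22_U02 I = (inr ord0 \notin I) && (inr ord_max \notin I).
Proof.
have : I \subset ground U22_U02 by rewrite ground_U22_U02 subsetT.
rewrite /= => -> /=; rewrite leqn0 cards_eq0 (leq_trans (max_card _)) ?card_ord //=.
apply/eqP/andP => [/setP I0 | [I0 I1]].
  by have := I0 ord0; have := I0 ord_max; rewrite !inE => -> ->.
by apply/setP => i; rewrite !inE; case: (ord2_cases i) => ->; apply/negbTE.
Qed.

Lemma iso_U22_U02 (T : finType) (N : matroid T) (a b c d : T) :
  uniq [:: a; b; c; d] -> ground N = [set a; b; c; d] ->
  (forall I : {set T}, I \subset ground N -> indep N I = (c \notin I) && (d \notin I)) ->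
  iso U22_U02 N.
Proof.
move=> uabcd gN indN.
pose f (s : 'I_2 + 'I_2) := match s with
  | inl i => if i == ord0 then a else b
  | inr i => if i == ord0 then c else d end.
pose g x : 'I_2 + 'I_2 := if x == d then inr ord_max else if x == c then inr ord0
            else if x == b then inl ord_max else inl ord0.
have injf : injective f.
  move: uabcd; rewrite /= !inE !negb_or !andbT.
  move=> /and3P [/and3P [ab ac ad] /andP [bc bd] cd].
  apply: (@can_inj _ _ f g) => -[] i; case: (ord2_cases i) => -> /=;
  by rewrite /g ?eqxx ?(negbTE ab) ?(negbTE ac) ?(negbTE ad) ?(negbTE bc) ?(negbTE bd)
    ?(negbTE cd).
have imf : f @: setT = [set a; b; c; d].
  apply/setP => x; rewrite !inE -!orbA; apply/imsetP/idP => [[s _ ->]|].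
    by case: s => i; case: (ord2_cases i) => -> /=; rewrite !eqxx ?orbT.
  by case/or4P => /eqP ->;
    [exists (inl ord0) | exists (inl ord_max) | exists (inr ord0) | exists (inr ord_max)].
exists f; split; first by move=> x y _ _ /injf.
  by rewrite ground_U22_U02 imf gN.
move=> I _; rewrite indep_U22_U02 indN; last by rewrite gN -imf imsetS ?subsetT.
by rewrite -(mem_imset I (inr ord0) injf) -(mem_imset I (inr ord_max) injf).
Qed.

Section Representation.
Variables (F : fieldType) (m n : nat) (A : 'M[F]_(m, n)).

Definition represents (M : matroid 'I_n) :=
  forall I, indep M I = (I \subset ground M) && free (cols A I).

Lemma vector_matroid_represents : represents (vector_matroid A).
Proof. by move=> I; rewrite /= subsetT. Qed.

Lemma delete_represents M D : represents M -> represents (delete M D).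
Proof.
move=> reprM I; rewrite /= reprM andbA.
by rewrite (andb_idr (fun sI => subset_trans sI (subsetDl _ _))).
Qed.

Variables (M : matroid 'I_n) (reprM : represents M).

Lemma span_max_indep (C J : {set 'I_n}) : C \subset ground M -> max_indep_in M C J ->
  (<<cols A C>> <= <<cols A J>>)%VS.
Proof.
move=> sCG /and3P [sJC iJ /forall_inP maxJ].
apply/span_subvP => v /mapP [x]; rewrite mem_enum => xC ->.
have [xJ|xJ] := boolP (x \in J); first exact: memv_span_cols.
have := maxJ x; rewrite inE xJ xC reprM => /(_ isT).
move: iJ; rewrite reprM => /andP [sJG fJ].
by rewrite free_cols_setU1 // fJ subUset sub1set (subsetP sCG) // sJG /= andbT negbK.
Qed.

Lemma U22_U02_minor_spans : has_minor_iso M U22_U02 ->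
  exists J c d, [/\ c |: (d |: J) \subset ground M, [/\ c \notin J, d \notin J & c != d],
    (#|J| + 2 <= m)%N, col c A \in <<cols A J>>%VS & col d A \in <<cols A J>>%VS].
Proof.
case=> C [D [sCG _ _ [f [injf imf indf]]]].
rewrite ground_U22_U02 in injf imf indf.
have {}injf : injective f by move=> x y /injf; apply; rewrite inE.
have fG s : f s \in ground M :\: C :\: D by have := imset_f f (in_setT s); rewrite imf.
have indfE (I : {set 'I_2 + 'I_2}) :
    [exists J, max_indep_in M C J && indep M (f @: I :|: J)] =
    (inr ord0 \notin I) && (inr ord_max \notin I).
  rewrite -(indep_minor (D := D)) -?indf ?indep_U22_U02 ?subsetT //.
  by apply/subsetP => _ /imsetP [s _ ->].
have /existsP [J /andP [maxJ iabJ]] : [exists J, max_indep_in M C J &&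
    indep M (f @: [set inl ord0; inl ord_max] :|: J)] by rewrite indfE !inE.
case/and3P: (maxJ) => sJC iJ _.
have sJG : J \subset ground M := subset_trans sJC sCG.
have fJ : free (cols A J) by move: iJ; rewrite reprM sJG.
have fsG s : f s \in ground M by move: (fG s); rewrite !inE => /and3P [].
have fsJ s : f s \notin J.
  apply: contra (subsetP sJC (f s)) _; by move: (fG s); rewrite !inE => /and3P [].
have spanJ i : col (f (inr i)) A \in <<cols A J>>%VS.
  have /existsPn/(_ J) : ~~ [exists J, max_indep_in M C J &&
      indep M (f @: [set inr i] :|: J)].
    by rewrite indfE !inE; case: (ord2_cases i) => ->; rewrite eqxx ?andbF.
  rewrite maxJ imset_set1 reprM subUset sub1set fsG sJG free_cols_setU1 //.
  by rewrite fJ /= andbT negbK.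
exists J, (f (inr ord0)), (f (inr ord_max)); split => //.
- by rewrite !subUset !sub1set !fsG sJG.
- by rewrite !fsJ (inj_eq injf).
move: iabJ; rewrite reprM => /andP [_ /card_free_cols].
by rewrite imsetU1 imset_set1 -setUA !cardsU1 in_setU1 (inj_eq injf) !fsJ addn2.
Qed.

Lemma U22_U02_minor_of_spans (C : {set 'I_n}) a b c d :
  [set a; b; c; d] :|: C \subset ground M ->
  [/\ a \notin C, b \notin C, c \notin C & d \notin C] -> uniq [:: a; b; c; d] ->
  free (cols A (a |: (b |: C))) ->
  col c A \in <<cols A C>>%VS -> col d A \in <<cols A C>>%VS ->
  has_minor_iso M U22_U02.
Proof.
set K := [set a; b; c; d]; rewrite subUset => /andP [sKG sCG] [aC bC cC dC].
move=> uabcd fabC cCA dCA.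
have sCabC : C \subset a |: (b |: C) := subset_trans (subsetUr _ C) (subsetUr _ _).
have maxC : max_indep_in M C C.
  by apply/max_indep_in_self; rewrite reprM sCG (free_colsS sCabC fabC).
have KC x : x \in K -> x \notin C by rewrite !inE -!orbA => /or4P [] /eqP ->.
have gminor : ground (delete (contract M C) (ground M :\: (K :|: C))) = K.
  apply/setP => x; rewrite /= !in_setD in_setU; have [xK|xK] := boolP (x \in K).
    by rewrite KC // (subsetP sKG).
  by case: (x \in C); case: (x \in ground M).
have dep_of_span x (I : {set 'I_n}) : x \in I -> x \notin C ->
    col x A \in <<cols A C>>%VS -> ~~ [exists J, max_indep_in M C J && indep M (I :|: J)].
  move=> xI xC xCA; apply/existsPn => J; apply/negP => /andP [maxJ].
  have sJC : J \subset C by case/and3P: maxJ.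
  rewrite reprM (negbTE (span_cols_notfree xI _ _)) ?andbF //.
    by apply: contra xC; apply: (subsetP sJC).
  exact: subvP (span_max_indep sCG maxJ) _ xCA.
exists C, (ground M :\: (K :|: C)); split => //.
- exact: subsetDl.
- by rewrite disjoints_subset; apply/subsetP => x xC; rewrite !inE xC orbT.
apply: (iso_U22_U02 uabcd gminor) => I sIminor; rewrite (indep_minor sIminor).
have sIK : I \subset K by rewrite -gminor.
have [cI|cI] := boolP (c \in I); first exact/negbTE/(dep_of_span _ _ cI).
have [dI|dI] := boolP (d \in I); first by rewrite andbF; exact/negbTE/(dep_of_span _ _ dI).
apply/existsP; exists C; rewrite maxC reprM subUset sCG (subset_trans sIK sKG).
apply: free_colsS fabC; rewrite subUset sCabC andbT; apply/subsetP => x xI.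
move: (subsetP sIK x xI) cI dI; rewrite !inE -!orbA => /or4P [] /eqP xe;
  by rewrite ?xe ?eqxx ?orbT // -xe xI.
Qed.

End Representation.

(** * The binary spike *)

Section Spike.
Variable r : nat.
Local Notation t := (tip r).
Local Notation M := (spike_mx r).
Implicit Types Z : {set 'I_(r + r + 1)}.

(* The paper's x_i and y_i: the columns e_i and 1 - e_i of [spike_mx r]. *)
Definition spike_x (i : 'I_r) : 'I_(r + r + 1) := lshift 1 (lshift r i).
Definition spike_y (i : 'I_r) : 'I_(r + r + 1) := lshift 1 (rshift r i).

Variant spike_elem_spec : 'I_(r + r + 1) -> Type :=
  | SpikeX i : spike_elem_spec (spike_x i)
  | SpikeY i : spike_elem_spec (spike_y i)
  | SpikeTip : spike_elem_spec t.

Lemma spike_elemP z : spike_elem_spec z.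
Proof.
case: (splitP z) => [j zj|k zk]; last first.
  have -> : z = t by apply/val_inj; rewrite /= zk (ord1 k).
  exact: SpikeTip.
case: (splitP j) => [i ji|i ji].
  have -> : z = spike_x i by apply/val_inj; rewrite /= zj ji.
  exact: SpikeX.
have -> : z = spike_y i by apply/val_inj; rewrite /= zj ji.
exact: SpikeY.
Qed.

Lemma spike_mx_x i l : M i (spike_x l) = (i == l)%:R.
Proof. by rewrite /spike_mx /spike_x !row_mxEl mxE. Qed.

Lemma spike_mx_y i l : M i (spike_y l) = (i != l)%:R.
Proof. by rewrite /spike_mx /spike_y row_mxEl row_mxEr !mxE; case: (i == l); apply/eqP. Qed.

Lemma spike_mx_tip i : M i t = 1.
Proof. by rewrite /spike_mx /tip row_mxEr !mxE. Qed.

Lemma col_spike_y p : col (spike_y p) M = col (spike_x p) M + col t M.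
Proof.
apply/matrixP => i j; rewrite [in RHS]mxE ![col _ _ _ _]mxE.
rewrite spike_mx_y spike_mx_x spike_mx_tip.
by case: (i == p); apply/eqP.
Qed.

Definition spike_xs Z := [set i | spike_x i \in Z].
Definition spike_ys Z := [set i | spike_y i \in Z].

Lemma card_spike_set Z : #|Z| = (#|spike_xs Z| + #|spike_ys Z| + (t \in Z))%N.
Proof.
rewrite -!sum1_card !(big_mkcond (fun j => j \in _)) /= !big_split_ord big_ord1 /=.
by congr (_ + _ + _); apply: eq_bigr => i _; rewrite inE.
Qed.

Lemma spike_coord Z i : (\sum_(j in Z) col j M) i ord0 =
  ((spike_x i \in Z) + #|spike_ys Z :\ i| + (t \in Z))%:R.
Proof.
have ex : \sum_(l < r) (if spike_x l \in Z then col (spike_x l) M i ord0 else 0) =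
          (spike_x i \in Z)%:R.
  rewrite (bigD1 i) //= big1 ?addr0 => [|l li]; rewrite mxE spike_mx_x.
    by rewrite eqxx; case: ifP.
  by rewrite eq_sym (negbTE li); case: ifP.
have ey : \sum_(l < r) (if spike_y l \in Z then col (spike_y l) M i ord0 else 0) =
          #|spike_ys Z :\ i|%:R.
  rewrite -sum1_card natr_sum [RHS]big_mkcond; apply: eq_bigr => l _.
  by rewrite mxE spike_mx_y !inE eq_sym; case: (l == i); case: (spike_y l \in Z).
rewrite summxE big_mkcond !big_split_ord big_ord1 /= -/t.
rewrite [X in X + _ + _]ex [X in _ + X + _]ey mxE spike_mx_tip !natrD.
by case: (t \in Z).
Qed.

Lemma spike_zero_sum_parity Z i : zero_sum M Z ->
  ~~ odd ((spike_x i \in Z) + #|spike_ys Z :\ i| + (t \in Z)).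
Proof.
by move=> /eqP/matrixP/(_ i ord0); rewrite spike_coord mxE => /eqP; rewrite F2_natr_eq0.
Qed.

Lemma spike_balanced_parity Z : (0 < r)%N -> zero_sum M Z ->
  spike_xs Z = spike_ys Z -> ~~ odd (#|spike_ys Z| + (t \in Z)).
Proof.
move=> r0 zZ /setP /(_ (Ordinal r0)); rewrite !inE => bal0.
have := spike_zero_sum_parity (Ordinal r0) zZ; have := cardsD1 (Ordinal r0) (spike_ys Z).
by rewrite inE bal0; lia.
Qed.

Lemma spike_zero_sum_balanced Z m : zero_sum M Z ->
  spike_x m \notin Z -> spike_y m \notin Z -> spike_xs Z = spike_ys Z.
Proof.
move=> zZ xm ym; apply/setP => i; rewrite !inE.
have := spike_zero_sum_parity i zZ; have := spike_zero_sum_parity m zZ.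
have := cardsD1 i (spike_ys Z); have := cardsD1 m (spike_ys Z).
rewrite !inE (negbTE xm) (negbTE ym).
by case: (spike_x i \in Z); case: (spike_y i \in Z) => //=; lia.
Qed.

Lemma card_spike_balanced Z :
  spike_xs Z = spike_ys Z -> #|Z| = (2 * #|spike_ys Z| + (t \in Z))%N.
Proof. by move=> bal; rewrite card_spike_set bal addnn -mul2n. Qed.

Lemma spike_small_zero_sum_balanced Z : zero_sum M Z -> (#|Z| < r)%N ->
  spike_xs Z = spike_ys Z.
Proof.
move=> zZ small.
case: (pickP [pred m | m \notin spike_xs Z :|: spike_ys Z]) => [m|full].
  by rewrite /= !inE negb_or => /andP [xm ym]; apply: spike_zero_sum_balanced zZ xm ym.
exfalso; have : (r <= #|spike_xs Z :|: spike_ys Z|)%N.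
  rewrite -{1}[r]card_ord -cardsT subset_leq_card //.
  by apply/subsetP => m _; apply/negbFE/full.
have := (leq_card_setU (spike_xs Z) (spike_ys Z)).1; rewrite card_spike_set in small; lia.
Qed.

Lemma spike_zero_sum_card Z : (0 < r)%N -> zero_sum M Z ->
  spike_xs Z = spike_ys Z -> Z != set0 -> (3 + (t \notin Z) <= #|Z|)%N.
Proof.
move=> r0 zZ bal; have := spike_balanced_parity r0 zZ bal.
by rewrite -card_gt0 card_spike_balanced //; case: (t \in Z) => /=; lia.
Qed.

Lemma spike_zero_sum_eq0 Z m : zero_sum M Z ->
  spike_x m \notin Z -> spike_y m \notin Z -> (#|spike_ys Z| + (t \in Z) <= 1)%N ->
  Z = set0.
Proof.
move=> zZ xm ym; have bal := spike_zero_sum_balanced zZ xm ym.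
have := spike_balanced_parity (leq_ltn_trans (leq0n m) (ltn_ord m)) zZ bal.
move=> ev le1; apply/eqP; rewrite -cards_eq0 card_spike_balanced //.
by move: ev le1; case: (t \in Z) => /=; lia.
Qed.

Lemma spike_minor_lower_bound N : represents M N -> has_minor_iso N U22_U02 ->
  (5 + (t \notin ground N) <= r)%N.
Proof.
move=> reprN /(U22_U02_minor_spans reprN) [J [c [d [sG [cJ dJ cd] rankJ cJA dJA]]]].
have r0 : (0 < r)%N by lia.
have [Z1 [z1 cZ1 sZ1]] := zero_sum_of_span cJ cJA.
have [Z2 [z2 dZ2 sZ2]] := zero_sum_of_span dJ dJA.
have small Z x : Z \subset x |: J -> (#|Z| < r)%N.
  by move=> /subset_leq_card; rewrite cardsU1; clear -rankJ; lia.
have bal1 := spike_small_zero_sum_balanced z1 (small _ _ sZ1).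
have bal2 := spike_small_zero_sum_balanced z2 (small _ _ sZ2).
set Z3 := [set j | (j \in Z1) (+) (j \in Z2)].
have bal3 : spike_xs Z3 = spike_ys Z3.
  apply/setP => i; move/setP/(_ i): bal1; move/setP/(_ i): bal2.
  by rewrite !inE => -> ->.
have cZ2 : c \notin Z2.
  by apply: contra (subsetP sZ2 c) _; rewrite !inE negb_or cd.
have nonempty Z x : x \in Z -> Z != set0 by move=> xZ; apply/set0Pn; exists x.
have k1 := spike_zero_sum_card r0 z1 bal1 (nonempty _ _ cZ1).
have k2 := spike_zero_sum_card r0 z2 bal2 (nonempty _ _ dZ2).
have cZ3 : c \in Z3 by rewrite inE cZ1 (negbTE cZ2).
have k3 := spike_zero_sum_card r0 (zero_sum_symdiff z1 z2) bal3 (nonempty _ _ cZ3).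
have sU : Z1 :|: Z2 \subset c |: (d |: J).
  rewrite subUset (subset_trans sZ1 (setUS _ (subsetUr _ _))).
  exact: subset_trans sZ2 (subsetUr _ _).
have := card_symdiff Z1 Z2; have := subset_leq_card sU; rewrite !cardsU1.
have [tG|tG] := boolP (t \in ground N); first by clear -k1 k2 k3 rankJ; lia.
have /norP [t1 t2] : ~~ ((t \in Z1) || (t \in Z2)).
  by rewrite -in_setU; apply: contra tG => /(subsetP sU) /(subsetP sG).
have t3 : t \notin Z3 by rewrite inE (negbTE t1) (negbTE t2).
by rewrite t1 t2 t3 in k1 k2 k3; clear -k1 k2 k3 rankJ; lia.
Qed.

Lemma spike_minor_with_tip N w : represents M N -> (5 <= r)%N ->
  (forall z, z \notin [set spike_x w; spike_y w] -> z \in ground N) ->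
  has_minor_iso N U22_U02.
Proof.
move=> reprN r5 sG; have wr := ltn_ord w.
have bw k : (k < 4)%N -> (bump w k < r)%N by rewrite /bump; lia.
set p := Ordinal (bw 0%N isT); set q := Ordinal (bw 1%N isT).
set u := Ordinal (bw 2%N isT); set v := Ordinal (bw 3%N isT).
apply: (U22_U02_minor_of_spans (C := [set spike_x p; spike_x q; t])
  (a := spike_x u) (b := spike_x v) (c := spike_y p) (d := spike_y q) reprN).
- apply/subsetP => z zS; apply: sG; move: zS; rewrite !inE -!val_eqE /= /bump; lia.
- by split; rewrite !inE -!val_eqE /= /bump; lia.
- by rewrite /= !inE -!val_eqE /= /bump; lia.
- apply: free_cols_F2 => Z sZ zZ.
  have out z : z \notin spike_x u |: (spike_x v |: [set spike_x p; spike_x q; t]) ->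
      z \notin Z by apply: contra; apply: (subsetP sZ).
  apply: (spike_zero_sum_eq0 (m := w) zZ).
  + by apply: out; rewrite !inE -!val_eqE /= /bump; lia.
  + by apply: out; rewrite !inE -!val_eqE /= /bump; lia.
  rewrite (_ : spike_ys Z = set0) ?cards0 ?leq_b1 //; apply/setP => l.
  rewrite !inE; apply/negbTE/out.
  by rewrite !inE -!val_eqE /= /bump; have := ltn_ord l; lia.
- by rewrite col_spike_y rpredD // memv_span_cols // !inE eqxx ?orbT.
- by rewrite col_spike_y rpredD // memv_span_cols // !inE eqxx ?orbT.
Qed.

Lemma spike_minor_without_tip N : represents M N -> (6 <= r)%N ->
  (forall z, z != t -> z \in ground N) -> has_minor_iso N U22_U02.
Proof.
move=> reprN r6 sG; have lt_r k : (k < 6)%N -> (k < r)%N by lia.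
set p := Ordinal (lt_r 0%N isT); set q := Ordinal (lt_r 1%N isT).
set w := Ordinal (lt_r 2%N isT); set u := Ordinal (lt_r 3%N isT).
set v := Ordinal (lt_r 4%N isT); set m := Ordinal (lt_r 5%N isT).
have col_tip : col t M = col (spike_y p) M - col (spike_x p) M.
  by rewrite col_spike_y addrAC subrr add0r.
apply: (U22_U02_minor_of_spans (C := [set spike_x p; spike_y p; spike_x q; spike_x w])
  (a := spike_x u) (b := spike_x v) (c := spike_y q) (d := spike_y w) reprN).
- by apply/subsetP => z zS; apply: sG; move: zS; rewrite !inE -!val_eqE /=; lia.
- by split; rewrite !inE -!val_eqE /=; lia.
- by rewrite /= !inE -!val_eqE /=; lia.
- apply: free_cols_F2 => Z sZ zZ.
  have out z : z \notin spike_x u |: (spike_x v |: [set spike_x p; spike_y p; spike_x q;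
      spike_x w]) -> z \notin Z by apply: contra; apply: (subsetP sZ).
  apply: (spike_zero_sum_eq0 (m := m) zZ).
  + by apply: out; rewrite !inE -!val_eqE /=; lia.
  + by apply: out; rewrite !inE -!val_eqE /=; lia.
  rewrite (negbTE (out t _)) ?addn0; last by rewrite !inE -!val_eqE /=; lia.
  rewrite -(cards1 p); apply/subset_leq_card/subsetP => l; rewrite !inE.
  apply: contraLR; rewrite -val_eqE /= => lp; apply: out.
  by rewrite !inE -!val_eqE /=; have := ltn_ord l; lia.
- by rewrite col_spike_y col_tip rpredD ?rpredB // memv_span_cols // !inE eqxx ?orbT.
- by rewrite col_spike_y col_tip rpredD ?rpredB // memv_span_cols // !inE eqxx ?orbT.
Qed.

Lemma spike_two_two_uniform_with_tip N w : represents M N ->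
  (forall z, z \notin [set spike_x w; spike_y w] -> z \in ground N) ->
  two_two_uniform N <-> (r <= 4)%N.
Proof.
move=> reprN sG; split => [noMinor | r4 /(spike_minor_lower_bound reprN)]; last by lia.
by rewrite leqNgt; apply/negP => r5; apply/noMinor/(spike_minor_with_tip reprN r5 sG).
Qed.

Lemma spike_two_two_uniform_without_tip N : represents M N ->
  (forall z, (z \in ground N) = (z != t)) -> two_two_uniform N <-> (r <= 5)%N.
Proof.
move=> reprN gN; split => [noMinor | r5 /(spike_minor_lower_bound reprN)].
  rewrite leqNgt; apply/negP => r6; apply/noMinor/(spike_minor_without_tip reprN r6).
  by move=> z; rewrite gN.
by rewrite gN eqxx; lia.
Qed.

End Spike.

Theorem lemma4p2 (r : nat) (hr : (3 <= r)%N) :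
  (two_two_uniform (spike r) <-> (r <= 4)%N) /\
  (forall y : 'I_(r + r + 1), y != tip r ->
     (two_two_uniform (delete (spike r) [set y]) <-> (r <= 4)%N)) /\
  (two_two_uniform (delete (spike r) [set tip r]) <-> (r <= 5)%N).
Proof.
have reprZ : represents (spike_mx r) (spike r) := vector_matroid_represents _.
have reprD Y : represents (spike_mx r) (delete (spike r) Y) := delete_represents Y reprZ.
have r0 : (0 < r)%N by lia.
split; last split.
- by apply: (spike_two_two_uniform_with_tip (w := Ordinal r0) reprZ) => z; rewrite inE.
- move=> y yt; have [w yw] : exists w, y \in [set spike_x w; spike_y w].
    by case: (spike_elemP y) yt => [w|w|]; rewrite ?eqxx // => _; exists w;
      rewrite !inE eqxx ?orbT.
  apply: (spike_two_two_uniform_with_tip (w := w) (reprD _)) => z zw.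
  by rewrite !inE andbT; apply: contraNneq zw => ->.
- by apply: spike_two_two_uniform_without_tip (reprD _) _ => z; rewrite !inE andbT.
Qed.
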